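(* Let $n\ge3$ be odd. Then $\lambda$ is an eigenvalue of $C_n$ if and only if $-\lambda$ is an eigenvalue of $C_n^{=}$.
   Context: A mixed graph is obtained from a finite simple graph by orienting some of its edges. With $\omega=\frac{1+\mathbf{i}\sqrt3}{2}$, the matrix $N$ has $(u,v)$-entry $\omega$ if $\overrightarrow{uv}$ is an arc, $\bar\omega$ if $\overrightarrow{vu}$ is an arc, $1$ for an undirected edge, $0$ otherwise; eigenvalues of a mixed graph are those of $N$. $C_n$ is the undirected $n$-cycle (whose $N$ is its ordinary adjacency matrix). $C_n^{=}$ is the mixed cycle $v_1v_2\cdots v_nv_1$ with arcs $\overrightarrow{v_1v_2},\overrightarrow{v_2v_3},\overrightarrow{v_3v_4}$ (indices mod $n$) and all other edges undirected. *)

From HB Require Import structures.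
From mathcomp Require Import all_boot all_order all_algebra all_field.
Set Implicit Arguments. Unset Strict Implicit. Unset Printing Implicit Defensive.
Import Order.TTheory GRing.Theory Num.Theory.
Local Open Scope ring_scope.

Definition omega : algC := (1 + 'i * sqrtC 3) / 2.

(* The matrix N of a mixed graph on vertex set 'I_n, given the undirected
   edge relation [und] (assumed symmetric) and the arc relation [arc]
   ([arc u v] means the arc u -> v). *)
Definition mixedN (n : nat) (und arc : rel 'I_n) : 'M[algC]_n :=
  \matrix_(u, v)
    if arc u v then omega
    else if arc v u then omega^*
    else if und u v then 1 else 0.

(* adjacency in the cycle v_0 v_1 ... v_{n-1} v_0 (vertex v_{k+1} of the
   paper is index k) *)
Definition cyc_adj (n : nat) : rel 'I_n :=
  fun u v => (v == (u.+1 %% n)%N :> nat) || (u == (v.+1 %% n)%N :> nat).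

Definition Cn_mx (n : nat) : 'M[algC]_n :=
  mixedN (@cyc_adj n) (fun _ _ => false).

(* arcs v1->v2, v2->v3, v3->v4 (indices mod n), i.e. k -> k+1 mod n for k<3 *)
Definition Ceq_arc (n : nat) : rel 'I_n :=
  fun u v => (u < 3)%N && (v == (u.+1 %% n)%N :> nat).

Definition Ceq_mx (n : nat) : 'M[algC]_n :=
  mixedN (fun u v => @cyc_adj n u v && ~~ @Ceq_arc n u v && ~~ @Ceq_arc n v u)
         (@Ceq_arc n).

(* With d_k = (-1)^k omega^(min k 3) and D = diag(d_0, ..., d_(n-1)), one has
   D N(C_n^=) = -N(C_n) D: along the three arcs d_(k+1) = -omega d_k absorbs
   the weight omega (and omega^* = omega^-1 its reverse entry), along the other
   edges d_(k+1) = -d_k.  The gauge closes up around the cycle since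
   d_n = (-1)^n omega^3 = 1 for odd n >= 3, so N(C_n^=) is similar to -N(C_n). *)

From mathcomp Require Import all_boot all_order all_algebra all_field.
From mathcomp Require Import zify ring.
Import Order.TTheory GRing.Theory Num.Theory.
Local Open Scope ring_scope.

Lemma eigenvalue_intertwine {F : fieldType} {n} {A B P : 'M[F]_n} {a} :
  P \in unitmx -> P *m A = B *m P -> eigenvalue B a -> eigenvalue A a.
Proof.
move=> Punit PA /eigenvalueP[x xB x_neq0]; apply/eigenvalueP; exists (x *m P).
  by rewrite -mulmxA PA mulmxA xB scalemxAl.
by rewrite mulmx_free_eq0 ?row_free_unit.
Qed.

Lemma eigenvalue_similar {F : fieldType} {n} {A B P : 'M[F]_n} :
  P \in unitmx -> P *m A = B *m P -> eigenvalue A =1 eigenvalue B.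
Proof.
move=> Punit PA a; apply/idP/idP; last exact: eigenvalue_intertwine PA.
apply: (eigenvalue_intertwine (P := invmx P)); first by rewrite unitmx_inv.
by rewrite -[LHS](mulmxK Punit) -(mulmxA (invmx P)) -PA mulmxA mulVmx ?mul1mx.
Qed.

Lemma eigenvalueN (F : fieldType) n (A : 'M[F]_n) a :
  eigenvalue (- A) (- a) = eigenvalue A a.
Proof.
apply/eigenvalueP/eigenvalueP => -[x xA x_neq0]; exists x => //.
  by apply: oppr_inj; rewrite -mulmxN xA scaleNr.
by rewrite mulmxN xA scaleNr.
Qed.

Lemma omega2 : omega ^+ 2 = omega - 1.
Proof. by rewrite /omega expr_div_n sqrrD exprMn sqrCi sqrtCK; field. Qed.

Lemma omega3 : omega ^+ 3 = -1.
Proof. by rewrite exprS omega2 mulrBr -expr2 omega2; ring. Qed.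

Lemma omega_neq0 : omega != 0.
Proof.
apply/eqP => omega0; move: omega3; rewrite omega0 expr0n => /eqP.
by rewrite eq_sym oppr_eq0 oner_eq0.
Qed.

Lemma omega_mul_conj : omega * omega^* = 1.
Proof.
rewrite -normCK; have := congr1 (fun x => `|x|) omega3.
rewrite normrX normrN1 => /eqP; rewrite pexpr_eq1 // => /eqP->; exact: expr1n.
Qed.

Definition cycle_gauge (k : nat) : algC := (-1) ^+ k * omega ^+ minn k 3.

Lemma cycle_gauge_neq0 k : cycle_gauge k != 0.
Proof. by rewrite mulf_neq0 ?signr_eq0 ?expf_neq0 ?omega_neq0. Qed.

Lemma cycle_gaugeS k :
  cycle_gauge k * (if (k < 3)%N then omega else 1) = - cycle_gauge k.+1.
Proof.
rewrite /cycle_gauge exprS; case: ltnP => k3.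
  by rewrite (minn_idPl k3) exprSr; ring.
by rewrite (minn_idPr (leqW k3)); ring.
Qed.

Lemma modn_succ n k : (k < n)%N -> (k.+1 %% n = if k.+1 == n then 0 else k.+1)%N.
Proof. by case: eqP => [->|]; rewrite ?modnn // => ? ?; rewrite modn_small; lia. Qed.

Section OddCycle.

Variable n : nat.
Hypothesis n_ge3 : (3 <= n)%N.
Hypothesis n_odd : odd n.

Lemma cycle_gauge_period : cycle_gauge n = 1.
Proof. by rewrite /cycle_gauge (minn_idPr n_ge3) -signr_odd n_odd omega3 mulrNN mulr1. Qed.

Lemma cycle_gauge_modS k : (k < n)%N -> cycle_gauge (k.+1 %% n) = cycle_gauge k.+1.
Proof.
move=> kn; rewrite modn_succ //; case: eqP => [->|//].
by rewrite cycle_gauge_period /cycle_gauge /= mulr1.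
Qed.

Lemma cyc_succ_asym (u v : 'I_n) :
  v = (u.+1 %% n)%N :> nat -> u = (v.+1 %% n)%N :> nat -> False.
Proof. rewrite !modn_succ //; do 2!case: eqP; lia. Qed.

Lemma cycle_gauge_Ceq_entry (u v : 'I_n) :
  cycle_gauge u * Ceq_mx n u v = - Cn_mx n u v * cycle_gauge v.
Proof.
have gauge_step (k : 'I_n) : cycle_gauge k * (if (k < 3)%N then omega else 1)
    = - cycle_gauge (k.+1 %% n).
  by rewrite cycle_gauge_modS // cycle_gaugeS.
rewrite !mxE /Ceq_arc /cyc_adj.
have [vS|vNS] := eqVneq (v : nat) (u.+1 %% n)%N.
  have /negPf uNS : (u : nat) != (v.+1 %% n)%N by apply/eqP; exact: cyc_succ_asym vS.
  rewrite uNS !andbT !andbF /= vS mulN1r -gauge_step.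
  by case: ltnP.
have [uS|_] := eqVneq (u : nat) (v.+1 %% n)%N; rewrite ?andbT ?andbF /=; last first.
  by rewrite mulr0 oppr0 mul0r.
rewrite mulN1r uS -[cycle_gauge _]opprK -gauge_step mulNr -mulrA.
by case: ltnP => _; rewrite ?omega_mul_conj !mulr1.
Qed.

Definition cycle_gauge_mx : 'M[algC]_n := diag_mx (\row_(i < n) cycle_gauge i).

Lemma cycle_gauge_mx_unit : cycle_gauge_mx \in unitmx.
Proof.
rewrite unitmxE det_diag unitfE; apply/prodf_neq0 => i _.
by rewrite mxE cycle_gauge_neq0.
Qed.

Lemma cycle_gauge_mx_Ceq : cycle_gauge_mx *m Ceq_mx n = - Cn_mx n *m cycle_gauge_mx.
Proof.
apply/matrixP => u v; rewrite mul_diag_mx mul_mx_diag [LHS]mxE [RHS]mxE.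
have -> : (- Cn_mx n) u v = - Cn_mx n u v by rewrite mxE.
by rewrite ![(\row_i _) 0 _]mxE cycle_gauge_Ceq_entry mulNr.
Qed.

End OddCycle.

Theorem lemma6p9 (n : nat) (hn : (3 <= n)%N) (hodd : odd n) (lambda : algC) :
  eigenvalue (Cn_mx n) lambda <-> eigenvalue (Ceq_mx n) (- lambda).
Proof.
have similar := eigenvalue_similar (cycle_gauge_mx_unit n) (cycle_gauge_mx_Ceq n hn hodd).
by rewrite similar eigenvalueN.
Qed.
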